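(* Let $G$ be a finite two-player zero-sum game with finite pure strategy sets $S_1,S_2$ and payoffs $v_1=-v_2$, extended bilinearly to mixed strategies. Run Anytime Double Oracle (ADO) from nonempty initial populations $\Pi^0_1\subseteq S_1$, $\Pi^0_2\subseteq S_2$: at each iteration $t=0,1,\ldots$, for each $i\in\{1,2\}$ let $\pi^t_i$ be a mixed strategy satisfying $$\pi^t_i\in\arg\max_{\sigma_i\in\Delta(\Pi^t_i)}\ \min_{\sigma_{-i}\in\Delta(S_{-i})} v_i(\sigma_i,\sigma_{-i}),$$ then for each $i$ choose a pure best response $\beta_i$ of player $i$ to $\pi^t_{-i}$ (a novel one $\beta_i\notin\Pi^t_i$ if such a best response exists) and set $\Pi^{t+1}_i=\Pi^t_i\cup\{\beta_i\}$. Then for every iteration $t$ for which $\pi^{t+1}$ is defined, $e(\pi^{t+1})\le e(\pi^t)$; that is, the exploitability of the ADO restricted profile is monotonically non-increasing.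
   Context: $\Delta(\Pi_i)$ denotes the set of mixed strategies of player $i$ supported on $\Pi_i$. The exploitability of a mixed strategy profile $\pi=(\pi_1,\pi_2)$ is $e(\pi)=\sum_{i\in\{1,2\}}\max_{\pi_i'}v_i(\pi_i',\pi_{-i})$, where the maximum is over all mixed strategies of player $i$ in the full game. A best response of player $i$ to $\pi_{-i}$ is a strategy maximizing $v_i(\cdot,\pi_{-i})$. *)

From mathcomp Require Import all_boot all_order all_algebra.
From mathcomp Require Import boolp classical_sets reals.
Set Implicit Arguments. Unset Strict Implicit. Unset Printing Implicit Defensive.
Import Order.TTheory GRing.Theory Num.Theory.
Local Open Scope ring_scope.
Local Open Scope classical_set_scope.

Section Game.
Variables (R : realType) (S1 S2 : finType).

Definition mixed (S : finType) (p : {ffun S -> R}) : Prop :=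
  (forall s, 0 <= p s) /\ \sum_(s : S) p s = 1.

Definition mixed_on (S : finType) (Pi : {set S}) (p : {ffun S -> R}) : Prop :=
  mixed p /\ forall s, s \notin Pi -> p s = 0.

Definition pure (S : finType) (s : S) : {ffun S -> R} :=
  [ffun x => if x == s then 1 else 0].

Definition v1 (A : S1 -> S2 -> R) (p1 : {ffun S1 -> R}) (p2 : {ffun S2 -> R}) : R :=
  \sum_(s1 : S1) \sum_(s2 : S2) p1 s1 * p2 s2 * A s1 s2.
Definition v2 (A : S1 -> S2 -> R) p1 p2 : R := - v1 A p1 p2.

Definition guarantee1 A (p1 : {ffun S1 -> R}) : R :=
  inf [set v1 A p1 q | q in [set q : {ffun S2 -> R} | mixed q]].
Definition guarantee2 A (p2 : {ffun S2 -> R}) : R :=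
  inf [set v2 A q p2 | q in [set q : {ffun S1 -> R} | mixed q]].

Definition restricted_maximin1 A (Pi : {set S1}) p1 : Prop :=
  mixed_on Pi p1 /\ forall q, mixed_on Pi q -> guarantee1 A q <= guarantee1 A p1.
Definition restricted_maximin2 A (Pi : {set S2}) p2 : Prop :=
  mixed_on Pi p2 /\ forall q, mixed_on Pi q -> guarantee2 A q <= guarantee2 A p2.

Definition best_response1 A (p2 : {ffun S2 -> R}) (b : {ffun S1 -> R}) : Prop :=
  mixed b /\ forall q, mixed q -> v1 A q p2 <= v1 A b p2.
Definition best_response2 A (p1 : {ffun S1 -> R}) (b : {ffun S2 -> R}) : Prop :=
  mixed b /\ forall q, mixed q -> v2 A p1 q <= v2 A p1 b.

Definition exploitability A (p1 : {ffun S1 -> R}) (p2 : {ffun S2 -> R}) : R :=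
  sup [set v1 A q p2 | q in [set q : {ffun S1 -> R} | mixed q]]
  + sup [set v2 A p1 q | q in [set q : {ffun S2 -> R} | mixed q]].

End Game.

(** Since the game is zero-sum, the exploitability of a profile is minus the
    sum of the two players' worst-case guarantees.  Populations only grow, so
    each later restricted maximin strategy maximizes its guarantee over a
    larger set of candidates, among them the earlier one; hence guarantees
    never decrease and exploitability never increases. *)
From mathcomp Require Import all_boot all_order all_algebra.
From mathcomp Require Import boolp classical_sets reals.
Set Implicit Arguments. Unset Strict Implicit. Unset Printing Implicit Defensive.
Import Order.TTheory GRing.Theory Num.Theory.
Local Open Scope ring_scope.
Local Open Scope classical_set_scope.

Lemma sup_image_opp (R : realType) (T : Type) (P : set T) (f : T -> R) :
  sup [set - f x | x in P] = - inf [set f x | x in P].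
Proof. by rewrite /inf opprK -image_comp. Qed.

Section ZeroSumGame.
Variables (R : realType) (S1 S2 : finType) (A : S1 -> S2 -> R).

Lemma exploitabilityE (p1 : {ffun S1 -> R}) (p2 : {ffun S2 -> R}) :
  exploitability A p1 p2 = - guarantee2 A p2 - guarantee1 A p1.
Proof.
rewrite /exploitability /guarantee1 /guarantee2 -!sup_image_opp.
by congr (sup _ + sup _); apply: eq_imagel => q _; rewrite /v2 ?opprK.
Qed.

Lemma mixed_on_subset (S : finType) (Pi Pi' : {set S}) (p : {ffun S -> R}) :
  (Pi \subset Pi')%SET -> mixed_on Pi p -> mixed_on Pi' p.
Proof.
move=> /fintype.subsetP sub [mp p_out]; split=> // s s_out.
by apply: p_out; apply: contra s_out; apply: sub.
Qed.

Lemma restricted_maximin1_mono (Pi Pi' : {set S1}) p p' :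
  (Pi \subset Pi')%SET -> restricted_maximin1 A Pi p ->
  restricted_maximin1 A Pi' p' -> guarantee1 A p <= guarantee1 A p'.
Proof. move=> sub [p_on _] [_ p'_max]; exact: p'_max (mixed_on_subset sub p_on). Qed.

Lemma restricted_maximin2_mono (Pi Pi' : {set S2}) p p' :
  (Pi \subset Pi')%SET -> restricted_maximin2 A Pi p ->
  restricted_maximin2 A Pi' p' -> guarantee2 A p <= guarantee2 A p'.
Proof. move=> sub [p_on _] [_ p'_max]; exact: p'_max (mixed_on_subset sub p_on). Qed.

End ZeroSumGame.

Local Close Scope classical_set_scope.

Theorem proposition1 (R : realType) (S1 S2 : finType) (A : S1 -> S2 -> R)
  (Pi1 : nat -> {set S1}) (Pi2 : nat -> {set S2})
  (pi1 : nat -> {ffun S1 -> R}) (pi2 : nat -> {ffun S2 -> R})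
  (b1 : nat -> S1) (b2 : nat -> S2) :
  Pi1 0%N != finset.set0 -> Pi2 0%N != finset.set0 ->
  (forall t, restricted_maximin1 A (Pi1 t) (pi1 t)) ->
  (forall t, restricted_maximin2 A (Pi2 t) (pi2 t)) ->
  (forall t, best_response1 A (pi2 t) (pure R (b1 t))) ->
  (forall t, best_response2 A (pi1 t) (pure R (b2 t))) ->
  (forall t, (exists s, s \notin Pi1 t /\ best_response1 A (pi2 t) (pure R s)) ->
             b1 t \notin Pi1 t) ->
  (forall t, (exists s, s \notin Pi2 t /\ best_response2 A (pi1 t) (pure R s)) ->
             b2 t \notin Pi2 t) ->
  (forall t, Pi1 t.+1 = Pi1 t :|: [set b1 t]) ->
  (forall t, Pi2 t.+1 = Pi2 t :|: [set b2 t]) ->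
  forall t, exploitability A (pi1 t.+1) (pi2 t.+1) <= exploitability A (pi1 t) (pi2 t).
Proof.
move=> _ _ maximin1 maximin2 _ _ _ _ grow1 grow2 t.
have g1 : guarantee1 A (pi1 t) <= guarantee1 A (pi1 t.+1).
  by apply: (restricted_maximin1_mono _ (maximin1 t) (maximin1 t.+1));
     rewrite grow1 finset.subsetUl.
have g2 : guarantee2 A (pi2 t) <= guarantee2 A (pi2 t.+1).
  by apply: (restricted_maximin2_mono _ (maximin2 t) (maximin2 t.+1));
     rewrite grow2 finset.subsetUl.
by rewrite !exploitabilityE lerD // lerN2.
Qed.
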